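(* Let $W^{(1)}$ be a pro-$p$ Coxeter group and $\mathcal H^{(1)}=\mathcal H^{(1)}_R(a,b)$ a generic pro-$p$ Hecke algebra over a commutative ring $R$ (notation as in the context), and assume that all $a_s$ ($s\in S$) are units of $R$ (so that every $T_w$ is invertible in $\mathcal H^{(1)}$). Let $\mathfrak A(W^{(1)})$ be the group with generators $\{T_w\}_{w\in W^{(1)}}$ and relations $T_{ww'}=T_wT_{w'}$ whenever $\ell(ww')=\ell(w)+\ell(w')$, and let $\mathfrak a$ be the two-sided ideal of the group algebra $R[\mathfrak A(W^{(1)})]$ generated by $T_{n_s}^2-a_sT_{n_s^2}-T_{n_s}b_s$, $s\in S$ (with $b_s=\sum_tc_tt$ read as $\sum_tc_tT_t$). Then the homomorphism \[ \varphi:R[\mathfrak A(W^{(1)})]/\mathfrak a\longrightarrow\mathcal H^{(1)} \] induced by $T_w\mapsto T_w$ is well defined and is an isomorphism of $R$-algebras.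
   Context: Coxeter group $(W_{\mathrm{aff}},S)$ with length $\ell$, $m(s,t)$ the order of $st$. Extended Coxeter group: $W=W_{\mathrm{aff}}\rtimes\Omega$, $(W_{\mathrm{aff}},S)$ Coxeter, $\Omega$ preserving $S$ under conjugation; $\ell(wu)=\ell(w)$ for $w\in W_{\mathrm{aff}},u\in\Omega$. Pro-$p$ Coxeter group: extension $1\to T\to W^{(1)}\xrightarrow{\pi}W\to1$ with $T$ abelian, $T\subseteq W^{(1)}$, lifts $n_s\in\pi^{-1}(s)$ satisfying braid relations ($m(s,t)$ alternating factors) when $m(s,t)<\infty$; length on $W^{(1)}$ is $\ell\circ\pi$; $W^{(1)}$ acts on $T$ and $R[T]$ by conjugation. Generic pro-$p$ Hecke algebra: given $a_s\in R$, $b_s\in R[T]$ such that $a_s=a_t$ and $(n_swn_t^{-1}w^{-1})w(b_t)=b_s$ whenever $s,t\in S$, $w\in W^{(1)}$, $s\pi(w)=\pi(w)t$, $\mathcal H^{(1)}_R(a,b)$ is the unique $R$-algebra free as $R$-module on $\{T_w\}_{w\in W^{(1)}}$ with $T_{ww'}=T_wT_{w'}$ when $\ell(ww')=\ell(w)+\ell(w')$ and $T_{n_s}^2=a_sT_{n_s^2}+T_{n_s}b_s$, $R[T]$ embedded via $t\mapsto T_t$. *)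

From HB Require Import structures.
From mathcomp Require Import all_boot all_algebra.
From mathcomp Require Import monoid.

Set Implicit Arguments.
Unset Strict Implicit.
Unset Printing Implicit Defensive.

Import GRing.Theory.

Definition wprod (G : groupType) (l : seq G) : G := (\prod_(x <- l) x)%g.

Definition ghom (G K : groupType) (f : G -> K) : Prop :=
  forall x y : G, f (x * y)%g = (f x * f y)%g.

Definition subgroup (G : groupType) (H : pred G) : Prop :=
  H 1%g /\ (forall x y, H x -> H y -> H (x * y)%g) /\ (forall x, H x -> H x^-1%g).

Definition has_order (G : groupType) (x : G) (m : nat) : Prop :=
  (0 < m)%N /\ (x ^+ m)%g = 1%g /\ (forall k, (0 < k < m)%N -> (x ^+ k)%g <> 1%g).

Definition alt_prod (G : groupType) (x y : G) (m : nat) : G :=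
  (\prod_(i < m) (if odd i then y else x))%g.

(* (Waff, S) is a Coxeter system: S is a set of involutions in Waff
   generating Waff, and Waff is presented by the generators S and the
   relations (st)^{m(s,t)} = 1 for m(s,t) = order of st finite
   (s^2 = 1 is the case s = t).  The presentation is expressed by its
   universal property: every assignment of S into a group satisfying the
   relations extends to a homomorphism on Waff. *)
Definition coxeter_system (W : groupType) (Waff S : pred W) : Prop :=
  [/\ subgroup Waff,
      (forall s, S s -> Waff s /\ s <> 1%g /\ (s * s)%g = 1%g),
      (forall w, Waff w -> exists l : seq W, all S l /\ w = wprod l) &
      (forall (K : groupType) (f : W -> K),
          (forall s t m, S s -> S t -> has_order (s * t)%g m ->
               ((f s * f t) ^+ m)%g = 1%g) ->
          exists g : W -> K,
            (forall x y, Waff x -> Waff y -> g (x * y)%g = (g x * g y)%g) /\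
            (forall s, S s -> g s = f s))].

Definition is_coxeter_length (W : groupType) (Waff S : pred W) (len : W -> nat)
  : Prop :=
  forall w, Waff w ->
    (exists l : seq W, all S l /\ w = wprod l /\ size l = len w) /\
    (forall l : seq W, all S l -> w = wprod l -> (len w <= size l)%N).

(* Extended Coxeter group  W = Waff ⋊ Ω  (internal semidirect product),
   with length ℓ(w u) = ℓ(w) for w ∈ Waff, u ∈ Ω. *)
Record extended_coxeter (W : groupType) (Waff Om S : pred W) (len : W -> nat)
  : Prop := {
  ec_coxeter : coxeter_system Waff S;
  ec_normal : forall x g, Waff x -> Waff (x ^ g)%g;
  ec_Om : subgroup Om;
  ec_inter : forall x, Waff x -> Om x -> x = 1%g;
  ec_prod : forall g, exists x u, Waff x /\ Om u /\ g = (x * u)%g;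
  ec_OmS : forall u s, Om u -> S s -> S (s ^ u)%g;
  ec_len_aff : is_coxeter_length Waff S len;
  ec_len_Om : forall w u, Waff w -> Om u -> len (w * u)%g = len w
}.

(* Pro-p Coxeter group: extension 1 -> T -> W1 -> W -> 1 with T = ker pi
   abelian, and lifts n_s of s in S satisfying the braid relations. *)
Record prop_coxeter (W : groupType) (S : pred W) (W1 : groupType)
  (pi : W1 -> W) (n : W -> W1) : Prop := {
  pc_hom : ghom pi;
  pc_surj : forall w, exists x, pi x = w;
  pc_T_abelian : forall x y, pi x = 1%g -> pi y = 1%g -> (x * y)%g = (y * x)%g;
  pc_lift : forall s, S s -> pi (n s) = s;
  pc_braid : forall s t m, S s -> S t -> has_order (s * t)%g m ->
      alt_prod (n s) (n t) m = alt_prod (n t) (n s) m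
}.

(* An element of R[G] is represented by a finite list of pairs (c, g),
   standing for  sum c g ; two lists represent the same element iff
   they have the same coefficient function. *)
Definition coef (R : pzRingType) (G : groupType) (l : seq (R * G)) (g : G) : R :=
  (\sum_(p <- l | p.2 == g) p.1)%R.

Definition gmul (R : pzRingType) (G : groupType) (l1 l2 : seq (R * G))
  : seq (R * G) :=
  [seq ((p.1 * q.1)%R, (p.2 * q.2)%g) | p <- l1, q <- l2].

(* membership in the two-sided ideal of R[G] generated by {gen i | P i}:
   f is (coefficientwise) a finite sum of terms x * gen i * y *)
Definition in_ideal (R : pzRingType) (G : groupType) (I : eqType) (P : I -> Prop)
  (gen : I -> seq (R * G)) (f : seq (R * G)) : Prop :=
  exists l : seq (seq (R * G) * I * seq (R * G)),
    (forall e, e \in l -> P e.1.2) /\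
    coef f =1 coef (flatten [seq gmul (gmul e.1.1 (gen e.1.2)) e.2 | e <- l]).

(* Conditions on the parameters a_s ∈ R, b_s ∈ R[T] (b_s given as a
   formal combination of elements of T = ker pi). *)
Definition hecke_params (R : pzRingType) (W : groupType) (S : pred W)
  (W1 : groupType) (pi : W1 -> W) (n : W -> W1)
  (a : W -> R) (b : W -> seq (R * W1)) : Prop :=
  (forall s, S s -> forall p, p \in b s -> pi p.2 = 1%g) /\
  (forall s t (w : W1), S s -> S t -> (s * pi w)%g = (pi w * t)%g ->
     a s = a t /\
     coef (b s) =1
       coef [seq (p.1, ((n s * w * (n t)^-1 * w^-1) * (w * p.2 * w^-1))%g)
            | p <- b t]).

Definition is_hecke_algebra (R : comPzRingType) (W : groupType) (S : pred W)
  (len : W -> nat) (W1 : groupType) (pi : W1 -> W) (n : W -> W1)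
  (a : W -> R) (b : W -> seq (R * W1)) (H : algType R) (Th : W1 -> H) : Prop :=
  [/\
      (forall (l : seq W1) (c : W1 -> R), uniq l ->
          (\sum_(w <- l) c w *: Th w)%R = 0%R -> forall w, w \in l -> c w = 0%R),
      (forall h : H, exists (l : seq W1) (c : W1 -> R),
          h = (\sum_(w <- l) c w *: Th w)%R),
      (forall w w', len (pi (w * w')%g) = (len (pi w) + len (pi w'))%N ->
          Th (w * w')%g = (Th w * Th w')%R) &
      (forall s, S s ->
          (Th (n s) * Th (n s))%R =
          (a s *: Th (n s * n s)%g + Th (n s) * \sum_(p <- b s) p.1 *: Th p.2)%R)].

(* A with tau : W1 -> A is the group with generators {T_w} and relations
   T_{ww'} = T_w T_{w'} whenever ℓ(ww') = ℓ(w) + ℓ(w'), ℓ = len ∘ pi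
   (expressed by generation + universal property of the presentation). *)
Definition is_braid_group (W : groupType) (len : W -> nat) (W1 : groupType)
  (pi : W1 -> W) (A : groupType) (tau : W1 -> A) : Prop :=
  [/\ (forall w w', len (pi (w * w')%g) = (len (pi w) + len (pi w'))%N ->
          tau (w * w')%g = (tau w * tau w')%g),
      (forall x : A, exists l : seq (bool * W1),
          x = wprod [seq (if e.1 then (tau e.2)^-1 else tau e.2)%g | e <- l]) &
      (forall (K : groupType) (f : W1 -> K),
          (forall w w', len (pi (w * w')%g) = (len (pi w) + len (pi w'))%N ->
              f (w * w')%g = (f w * f w')%g) ->
          exists g : A -> K, ghom g /\ forall w, g (tau w) = f w)].

Definition quad_gen (R : pzRingType) (W W1 A : groupType) (n : W -> W1)
  (a : W -> R) (b : W -> seq (R * W1)) (tau : W1 -> A) (s : W)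
  : seq (R * A) :=
  [:: (1%R, (tau (n s) * tau (n s))%g); ((- a s)%R, tau (n s * n s)%g)] ++
  [seq ((- p.1)%R, (tau (n s) * tau p.2)%g) | p <- b s].

Definition lin_ext (R : comPzRingType) (A : groupType) (H : algType R)
  (iota : A -> H) (f : seq (R * A)) : H :=
  (\sum_(p <- f) p.1 *: iota p.2)%R.

(* Every [T_w] is invertible in [H]: by induction on the length it suffices
   to treat [T_{n_s}], and the quadratic relation gives
   [T_{n_s} (T_{n_s} - b_s) = a_s T_{n_s^2}], where [a_s] is a unit and
   [T_{n_s^2}] is invertible because [n_s^2] has length zero.  Hence the
   presentation of 𝔄 yields a group map 𝔄 -> H^× extending [w |-> T_w], whose
   linear extension kills the ideal 𝔞.
   Conversely, modulo 𝔞 every element of R[𝔄] is an R-combination of the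
   [T_w], w ∈ W^(1): the elements of 𝔄 whose left multiplication preserves such
   combinations modulo 𝔞 form a group, and it contains [T_{n_s}^{±1}] (by the
   quadratic relation) and [T_u] for [u] of length zero, hence all of 𝔄.
   As the [T_w] are linearly independent in [H], an element of the kernel is
   congruent to the zero combination, i.e. lies in 𝔞. *)

From HB Require Import structures.
From mathcomp Require Import all_boot all_algebra.
From mathcomp Require Import monoid.
From mathcomp Require Import ring zify.

Set Implicit Arguments.
Unset Strict Implicit.
Unset Printing Implicit Defensive.

Import GRing.Theory.
Local Open Scope ring_scope.

(** * Formal sums, ideals and linear extensions *)

Section FormalSums.
Variables (R : pzRingType) (G : groupType).
Implicit Types (f g : seq (R * G)) (c : R) (x y : G).

Definition fsopp f : seq (R * G) := [seq (- p.1, p.2) | p <- f].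

Definition keys f : seq G := undup [seq p.2 | p <- f].

Lemma keys_uniq f : uniq (keys f). Proof. exact: undup_uniq. Qed.

Lemma coef_nil x : coef ([::] : seq (R * G)) x = 0.
Proof. by rewrite /coef big_nil. Qed.

Lemma coef_cons c y f x : coef ((c, y) :: f) x = (y == x)%:R * c + coef f x.
Proof. by rewrite /coef big_cons /=; case: eqP; rewrite ?mul1r ?mul0r ?add0r. Qed.

Lemma coef_cat f g x : coef (f ++ g) x = coef f x + coef g x.
Proof. by rewrite /coef big_cat. Qed.

Lemma coef_opp f x : coef (fsopp f) x = - coef f x.
Proof. by rewrite /coef big_map sumrN. Qed.

Lemma coef_flatten (fs : seq (seq (R * G))) x :
  coef (flatten fs) x = \sum_(f <- fs) coef f x.
Proof. by rewrite /coef big_flatten. Qed.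

Lemma sum_regroup (M : lmodType R) (v : G -> M) (K : seq G) f :
  uniq K -> {subset keys f <= K} ->
  \sum_(p <- f) p.1 *: v p.2 = \sum_(w <- K) coef f w *: v w.
Proof.
move=> uK; elim: f => [|[c y] f IH] fK.
  by rewrite big_nil big1 // => w _; rewrite coef_nil scale0r.
have yK : y \in K by apply: fK; rewrite mem_undup inE eqxx.
rewrite big_cons IH => [|w fw]; last by apply: fK; rewrite mem_undup inE orbC -mem_undup fw.
under [RHS]eq_bigr => w _ do rewrite coef_cons scalerDl.
rewrite big_split /=; congr (_ + _).
rewrite (bigD1_seq y) //= eqxx mul1r big1 ?addr0 // => w.
by rewrite eq_sym => /negbTE ->; rewrite mul0r scale0r.
Qed.

Lemma coef_map_keys (G' : groupType) (h : G -> G') f (x : G') :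
  coef [seq (p.1, h p.2) | p <- f] x = \sum_(w <- keys f) coef f w * (h w == x)%:R.
Proof.
rewrite -(@sum_regroup R^o (fun w => (h w == x)%:R)) ?keys_uniq //.
rewrite /coef big_map big_mkcond; apply: eq_bigr => p _ /=.
by case: eqP => _; rewrite /GRing.scale /= ?mulr1 ?mulr0.
Qed.

Lemma gmul_monoml c y f : gmul [:: (c, y)] f = [seq (c * q.1, (y * q.2)%g) | q <- f].
Proof. exact: allpairs1l. Qed.

Lemma gmul_monomr c y f : gmul f [:: (c, y)] = [seq (p.1 * c, (p.2 * y)%g) | p <- f].
Proof. exact: allpairs1r. Qed.

Lemma coef_gmul_monoml c y f x : coef (gmul [:: (c, y)] f) x = c * coef f (y^-1 * x)%g.
Proof.
rewrite gmul_monoml /coef big_map mulr_sumr; apply: eq_big => q //=.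
by apply/eqP/eqP => [<-|->]; rewrite ?mulKg ?mulVKg.
Qed.

Lemma coef_gmul_monomr c y f x : coef (gmul f [:: (c, y)]) x = coef f (x * y^-1)%g * c.
Proof.
rewrite gmul_monomr /coef big_map mulr_suml; apply: eq_big => q //=.
by apply/eqP/eqP => [<-|->]; rewrite ?mulgK ?mulgVK.
Qed.

Lemma gmul_monomlA q f g : gmul [:: q] (gmul f g) = gmul (gmul [:: q] f) g.
Proof.
case: q => c y; rewrite !gmul_monoml /gmul map_allpairs allpairs_mapl.
by apply: eq_allpairs => p r /=; rewrite mulrA mulgA.
Qed.

Lemma gmul_monomrA q f g : gmul (gmul f g) [:: q] = gmul f (gmul g [:: q]).
Proof.
case: q => c y; rewrite !gmul_monomr /gmul map_allpairs allpairs_mapr.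
by apply: eq_allpairs => p r /=; rewrite mulrA mulgA.
Qed.

Section Ideal.
Variables (I : eqType) (P : I -> Prop) (gen : I -> seq (R * G)).
Local Notation ideal := (in_ideal P gen).

Lemma in_ideal_coef f g : ideal f -> coef f =1 coef g -> ideal g.
Proof. by move=> [l [lP fl]] fg; exists l; split=> // x; rewrite -fg fl. Qed.

Lemma in_ideal0 f : coef f =1 (fun=> 0) -> ideal f.
Proof. by move=> f0; exists [::]; split=> // x; rewrite f0 coef_nil. Qed.

Lemma in_ideal_cat f g : ideal f -> ideal g -> ideal (f ++ g).
Proof.
move=> [l [lP fl]] [m [mP gm]]; exists (l ++ m); split.
  by move=> e; rewrite mem_cat => /orP[/lP | /mP].
by move=> x; rewrite coef_cat fl gm map_cat flatten_cat coef_cat.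
Qed.

Lemma in_ideal_gen i : P i -> ideal (gen i).
Proof.
move=> Pi; exists [:: ([:: (1, 1%g)], i, [:: (1, 1%g)])]; split.
  by move=> e; rewrite inE => /eqP ->.
by move=> x /=; rewrite cats0 coef_gmul_monomr coef_gmul_monoml invg1 mulg1 mul1g mulr1 mul1r.
Qed.

Lemma in_ideal_mull c y f : ideal f -> ideal (gmul [:: (c, y)] f).
Proof.
move=> [l [lP fl]]; exists [seq (gmul [:: (c, y)] e.1.1, e.1.2, e.2) | e <- l]; split.
  by move=> _ /mapP [e le ->] /=; apply: lP.
move=> x; rewrite coef_gmul_monoml fl !coef_flatten !big_map mulr_sumr.
by apply: eq_bigr => e _; rewrite -coef_gmul_monoml !gmul_monomlA.
Qed.

Lemma in_ideal_mulr c y f : ideal f -> ideal (gmul f [:: (c, y)]).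
Proof.
move=> [l [lP fl]]; exists [seq (e.1.1, e.1.2, gmul e.2 [:: (c, y)]) | e <- l]; split.
  by move=> _ /mapP [e le ->] /=; apply: lP.
move=> x; rewrite coef_gmul_monomr fl !coef_flatten !big_map mulr_suml.
by apply: eq_bigr => e _; rewrite -coef_gmul_monomr !gmul_monomrA.
Qed.

End Ideal.
End FormalSums.

Section LinearExtension.
Variables (R : comPzRingType) (G : groupType) (H : algType R) (F : G -> H).
Implicit Types (f g : seq (R * G)).

Lemma lin_ext_cat f g : lin_ext F (f ++ g) = lin_ext F f + lin_ext F g.
Proof. by rewrite /lin_ext big_cat. Qed.

Lemma lin_ext_opp f : lin_ext F (fsopp f) = - lin_ext F f.
Proof. by rewrite /lin_ext big_map -sumrN; apply: eq_bigr => p _; rewrite scaleNr. Qed.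

Lemma lin_ext_keys (K : seq G) f : uniq K -> {subset keys f <= K} ->
  lin_ext F f = \sum_(x <- K) coef f x *: F x.
Proof. exact: sum_regroup. Qed.

Lemma lin_ext_coef f g : coef f =1 coef g -> lin_ext F f = lin_ext F g.
Proof.
set K := keys (f ++ g) => fg.
have sub h : {subset keys h <= K} -> lin_ext F h = \sum_(x <- K) coef h x *: F x.
  by move=> hK; rewrite (lin_ext_keys (keys_uniq _) hK).
rewrite !sub => [|x|x]; first by apply: eq_bigr => x _; rewrite fg.
  by rewrite !mem_undup map_cat mem_cat => ->; rewrite orbT.
by rewrite !mem_undup map_cat mem_cat => ->.
Qed.

Hypothesis FM : forall x y, F (x * y)%g = F x * F y.

Lemma lin_ext_gmul f g : lin_ext F (gmul f g) = lin_ext F f * lin_ext F g.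
Proof.
rewrite /lin_ext /gmul big_allpairs_dep mulr_suml; apply: eq_bigr => p _.
rewrite mulr_sumr; apply: eq_bigr => q _ /=.
by rewrite FM -scalerAl -scalerAr scalerA.
Qed.

Lemma lin_ext_in_ideal (I : eqType) (P : I -> Prop) (gen : I -> seq (R * G)) f :
  (forall i, P i -> lin_ext F (gen i) = 0) -> in_ideal P gen f -> lin_ext F f = 0.
Proof.
move=> gen0 [l [lP fl]]; rewrite (lin_ext_coef fl) /lin_ext big_flatten big_map /=.
rewrite big1_seq // => e /andP[_ le].
by rewrite -/(lin_ext F _) !lin_ext_gmul gen0 ?mulr0 ?mul0r //; apply: lP.
Qed.

End LinearExtension.

(** * Units of a ring *)

Section RingUnits.
Variable V : pzRingType.

Definition invertible (x : V) := exists y, x * y = 1 /\ y * x = 1.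

Lemma invertible_lr (x y z : V) : x * y = 1 -> z * x = 1 -> invertible x.
Proof.
move=> xy zx; exists y; split=> //.
suff -> : y = z by [].
by rewrite -[z]mulr1 -xy mulrA zx mul1r.
Qed.

Lemma invertibleM (x y : V) : invertible x -> invertible y -> invertible (x * y).
Proof.
move=> [x' [xx' x'x]] [y' [yy' y'y]]; exists (y' * x'); split.
  by rewrite mulrA -(mulrA x) yy' mulr1.
by rewrite mulrA -(mulrA y') x'x mulr1.
Qed.

Definition inverse_pair (p : V * V) : bool := (p.1 * p.2 == 1) && (p.2 * p.1 == 1).

Definition ring_units := {p : V * V | inverse_pair p}.
HB.instance Definition _ := Choice.on ring_units.

Definition uval (u : ring_units) : V := (sval u).1.

Lemma unit_one_subproof : inverse_pair (1, 1). Proof. by rewrite /inverse_pair /= mulr1 eqxx. Qed.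

Lemma unit_mul_subproof (u v : ring_units) :
  inverse_pair ((sval u).1 * (sval v).1, (sval v).2 * (sval u).2).
Proof.
case: u v => [[x x'] uP] [[y y'] vP] /=.
move: uP vP => /andP[/eqP xx' /eqP x'x] /andP[/eqP yy' /eqP y'y].
rewrite /inverse_pair /= mulrA -(mulrA x) yy' mulr1 xx'.
by rewrite -(mulrA y') (mulrA x') x'x mul1r y'y !eqxx.
Qed.

Lemma unit_inv_subproof (u : ring_units) : inverse_pair ((sval u).2, (sval u).1).
Proof. by case: u => [[x x'] xP]; rewrite /inverse_pair andbC. Qed.

Definition unit_one : ring_units := exist inverse_pair _ unit_one_subproof.
Definition unit_mul (u v : ring_units) : ring_units := exist inverse_pair _ (unit_mul_subproof u v).
Definition unit_inv (u : ring_units) : ring_units := exist inverse_pair _ (unit_inv_subproof u).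

Lemma unit_mulA : associative unit_mul.
Proof. by move=> u v w; apply: val_inj; rewrite /= !mulrA. Qed.

Lemma unit_mul1l : left_id unit_one unit_mul.
Proof. by case=> [[x x'] ?]; apply: val_inj; rewrite /= mul1r mulr1. Qed.

Lemma unit_mul1r : right_id unit_one unit_mul.
Proof. by case=> [[x x'] ?]; apply: val_inj; rewrite /= mul1r mulr1. Qed.

Lemma unit_mulVl : left_inverse unit_one unit_inv unit_mul.
Proof.
case=> [[x x'] xP]; apply: val_inj => /=.
by move/andP: xP => /= [/eqP xx' /eqP x'x]; rewrite ?xx' ?x'x.
Qed.

Lemma unit_mulVr : right_inverse unit_one unit_inv unit_mul.
Proof.
case=> [[x x'] xP]; apply: val_inj => /=.
by move/andP: xP => /= [/eqP xx' /eqP x'x]; rewrite ?xx' ?x'x.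
Qed.

HB.instance Definition _ :=
  isGroup.Build ring_units unit_mulA unit_mul1l unit_mul1r unit_mulVl unit_mulVr.

Lemma uvalM (u v : ring_units) : uval (u * v)%g = uval u * uval v.
Proof. by []. Qed.

Lemma uval1 : uval 1%g = 1.
Proof. by []. Qed.

Lemma uval_inj : injective uval.
Proof.
case=> [[x x'] xP] [[y y'] yP]; rewrite /uval /= => exy; apply: val_inj => /=.
move: xP yP; rewrite -exy => /andP[/eqP xx' /eqP x'x] /andP[/eqP xy' /eqP y'x].
by congr (_, _); rewrite -[x']mulr1 -xy' mulrA x'x mul1r.
Qed.

Lemma inverse_pair_exists (x : V) : invertible x -> exists y, inverse_pair (x, y).
Proof. by move=> [y [xy yx]]; exists y; apply/andP; split; apply/eqP. Qed.

Definition to_unit (x : V) (hx : invertible x) : ring_units :=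
  exist inverse_pair _ (xchooseP (inverse_pair_exists hx)).

Lemma uval_to_unit (x : V) (hx : invertible x) : uval (to_unit hx) = x.
Proof. by []. Qed.

End RingUnits.

Lemma ghom1 (G K : groupType) (f : G -> K) : ghom f -> f 1%g = 1%g.
Proof. by move=> fM; apply: (@mulIg _ (f 1%g)); rewrite -fM !mul1g. Qed.

Lemma ghomV (G K : groupType) (f : G -> K) x : ghom f -> f x^-1%g = (f x)^-1%g.
Proof. by move=> fM; apply: (@mulIg _ (f x)); rewrite -fM !mulVg ghom1. Qed.

Lemma wprod_nil (G : groupType) : wprod ([::] : seq G) = 1%g.
Proof. by rewrite /wprod big_nil. Qed.

Lemma wprod_cons (G : groupType) (x : G) l : wprod (x :: l) = (x * wprod l)%g.
Proof. by rewrite /wprod big_cons. Qed.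

(** * Length in an extended Coxeter group *)

Section ExtendedCoxeter.
Variables (W : groupType) (Waff Om S : pred W) (len : W -> nat).
Hypothesis HW : extended_coxeter Waff Om S len.
Local Open Scope group_scope.

Let cox := ec_coxeter HW.

Lemma Waff1 : Waff 1. Proof. by case: cox => [[]]. Qed.

Lemma WaffM x y : Waff x -> Waff y -> Waff (x * y).
Proof. by case: cox => [[_ []]]; auto. Qed.

Lemma Waff_gen s : S s -> Waff s.
Proof. by case: cox => _ gen _ _ /gen[]. Qed.

Lemma gen_invol s : S s -> s * s = 1.
Proof. by case: cox => _ gen _ _ /gen[_ []]. Qed.

Lemma gen_inv s : S s -> s^-1 = s.
Proof. by move/gen_invol/mulg1_eq. Qed.

Lemma Waff_wprod l : all S l -> Waff (wprod l).
Proof.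
elim: l => [|t l IH] /=; first by rewrite wprod_nil Waff1.
by case/andP=> St Sl; rewrite wprod_cons; apply: WaffM; [apply: Waff_gen | apply: IH].
Qed.

Lemma reduced_word x : Waff x -> exists2 l, all S l & x = wprod l /\ size l = len x.
Proof. by move/(ec_len_aff HW) => [[l [Sl xl]] _]; exists l. Qed.

Lemma len_wprod_le l : all S l -> (len (wprod l) <= size l)%N.
Proof. by move=> Sl; case: (ec_len_aff HW (Waff_wprod Sl)) => _; apply. Qed.

Lemma len1 : len 1 = 0%N.
Proof. by apply/eqP; rewrite -leqn0 -wprod_nil (@len_wprod_le [::]). Qed.

Lemma len_eq0 x : Waff x -> len x = 0%N -> x = 1.
Proof. by case/reduced_word=> [[|t l] _ [-> <-]] //; rewrite wprod_nil. Qed.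

Lemma len_mulS_le s x : S s -> Waff x -> (len (s * x) <= (len x).+1)%N.
Proof.
move=> Ss /reduced_word[l Sl [-> <-]].
by rewrite -wprod_cons (@len_wprod_le (s :: l)) //= Ss.
Qed.

Definition sign : ring_units int := exist (@inverse_pair int) (-1, -1)%R erefl.

Lemma sign_character : exists g : W -> ring_units int,
  (forall x y, Waff x -> Waff y -> g (x * y) = g x * g y) /\
  (forall s, S s -> g s = sign).
Proof.
case: cox => _ _ _; apply=> s t m _ _ _.
by rewrite [sign * sign](_ : _ = 1) ?expg1n //; apply: val_inj.
Qed.

(* The sign character gives [len (s * x) <> len x]; the rest is [len_mulS_le]. *)
Lemma len_mulS_aff s x : S s -> Waff x ->
  len (s * x) = (len x).+1 \/ len x = (len (s * x)).+1.
Proof.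
move=> Ss Wx; have [g [gM gS]] := sign_character.
have [W_1 Ws] := (Waff1, Waff_gen Ss).
have g1 : g 1 = 1 by apply: (@mulIg _ (g 1)); rewrite -gM // mulg1 mul1g.
have g_len y : Waff y -> g y = sign ^+ len y.
  case/reduced_word=> l Sl [-> <-]; elim: l Sl => [|t l IH] /=.
    by rewrite wprod_nil g1.
  case/andP=> St Sl; have [Wt Wl] := (Waff_gen St, Waff_wprod Sl).
  by rewrite wprod_cons gM // gS // IH // expgS.
have Wsx : Waff (s * x) by apply: WaffM.
have le1 := len_mulS_le Ss Wx.
have le2 : (len x <= (len (s * x)).+1)%N.
  by rewrite -{1}[x]mul1g -(gen_invol Ss) -mulgA len_mulS_le.
have neq : len (s * x) <> len x.
  move=> e; have := g_len _ Wsx; rewrite gM // gS // g_len // e.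
  by move/(canRL (mulgK _)); rewrite mulgV => /(congr1 val).
lia.
Qed.

Lemma len0_Om y : len y = 0%N -> Om y.
Proof.
case: (ec_prod HW y) => x [u [Wx [Ou ->]]]; rewrite (ec_len_Om HW Wx Ou).
by move/(len_eq0 Wx) ->; rewrite mul1g.
Qed.

Lemma len_Om u : Om u -> len u = 0%N.
Proof. by move=> Ou; rewrite -(mul1g u) (ec_len_Om HW Waff1 Ou) len1. Qed.

Lemma len_conj_le x u : Waff x -> Om u -> (len (x ^ u) <= len x)%N.
Proof.
move=> /reduced_word[l Sl [-> <-]] Ou.
have -> : wprod l ^ u = wprod [seq t ^ u | t <- l] by rewrite /wprod conjg_prod big_map.
rewrite -(size_map (conjg^~ u)) len_wprod_le //.
by apply/allP=> _ /mapP[t lt ->]; apply: (ec_OmS HW Ou); apply: (allP Sl).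
Qed.

Lemma len_conj x u : Waff x -> Om u -> len (x ^ u) = len x.
Proof.
move=> Wx Ou; apply/eqP; rewrite eqn_leq len_conj_le //=.
have [_ [_ OmV]] := ec_Om HW.
by rewrite -{1}(conjgK u x) len_conj_le ?OmV ?(ec_normal HW).
Qed.

Lemma len0_mul y z : len y = 0%N -> len (y * z) = len z.
Proof.
move/len0_Om=> Oy; case: (ec_prod HW z) => x [u [Wx [Ou ->]]].
have [_ [OmM OmV]] := ec_Om HW.
have -> : y * (x * u) = x ^ y^-1 * (y * u) by rewrite conjgE invgK !mulgA mulgVK.
have Wxy : Waff (x ^ y^-1) by apply: (ec_normal HW).
by rewrite (ec_len_Om HW Wxy (OmM _ _ Oy Ou)) (ec_len_Om HW Wx Ou) len_conj ?OmV.
Qed.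

Lemma len0_inv y : len y = 0%N -> len y^-1 = 0%N.
Proof. by have [_ [_ OmV]] := ec_Om HW; move/len0_Om/OmV/len_Om. Qed.

Lemma len_mulS s w : S s -> len (s * w) = (len w).+1 \/ len w = (len (s * w)).+1.
Proof.
move=> Ss; case: (ec_prod HW w) => x [u [Wx [Ou ->]]].
have Wsx : Waff (s * x) by apply: WaffM => //; apply: Waff_gen.
by rewrite mulgA (ec_len_Om HW Wsx Ou) (ec_len_Om HW Wx Ou); apply: len_mulS_aff.
Qed.

Lemma len_gen s : S s -> len s = 1%N.
Proof. by move=> Ss; case: (len_mulS 1 Ss); rewrite mulg1 len1. Qed.

Lemma left_descent w : (0 < len w)%N -> exists2 s, S s & len w = (len (s * w)).+1.
Proof.
case: (ec_prod HW w) => x [u [Wx [Ou ->]]]; rewrite (ec_len_Om HW Wx Ou).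
case/reduced_word: (Wx) => l Sl [ex el].
case: l Sl ex el => [_ _ <- //|s l /= /andP[Ss Sl] ex el _].
exists s => //; rewrite mulgA ex wprod_cons mulgA (gen_invol Ss) mul1g.
rewrite (ec_len_Om HW (Waff_wprod Sl) Ou).
have := len_wprod_le Sl; have := len_mulS_le Ss (Waff_wprod Sl).
by rewrite -wprod_cons -ex; lia.
Qed.

End ExtendedCoxeter.

(** * The pro-p Hecke algebra as a quotient of R[𝔄] *)

Section ProPHecke.
Variables (R : comPzRingType) (W : groupType) (Waff Om S : pred W) (len : W -> nat).
Hypothesis HW : extended_coxeter Waff Om S len.
Variables (W1 : groupType) (pi : W1 -> W) (n : W -> W1).
Hypothesis HW1 : prop_coxeter S pi n.
Variables (a : W -> R) (b : W -> seq (R * W1)).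
Hypothesis Hab : hecke_params S pi n a b.
Variables (H : algType R) (Th : W1 -> H).
Hypothesis HH : is_hecke_algebra S len pi n a b Th.
Variables (A : groupType) (tau : W1 -> A).
Hypothesis HA : is_braid_group len pi tau.

Local Notation ell w := (len (pi w)).

Lemma piM x y : pi (x * y)%g = (pi x * pi y)%g. Proof. exact: (pc_hom HW1). Qed.

Lemma piV x : pi x^-1%g = (pi x)^-1%g. Proof. exact: ghomV (pc_hom HW1). Qed.

Lemma ell1 : ell 1%g = 0%N. Proof. by rewrite (ghom1 (pc_hom HW1)) (len1 HW). Qed.

Lemma ell_n s : S s -> ell (n s) = 1%N.
Proof. by move=> Ss; rewrite (pc_lift HW1 Ss) (len_gen HW). Qed.

Lemma ell_nn s : S s -> ell (n s * n s)%g = 0%N.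
Proof. by move=> Ss; rewrite piM (pc_lift HW1 Ss) (gen_invol HW Ss) (len1 HW). Qed.

Lemma ell0_mul u w : ell u = 0%N -> ell (u * w)%g = ell w.
Proof. by rewrite piM; apply: (len0_mul HW). Qed.

Lemma ell0_inv u : ell u = 0%N -> ell u^-1%g = 0%N.
Proof. by rewrite piV; apply: (len0_inv HW). Qed.

Lemma pi_b s p : S s -> p \in b s -> pi p.2 = 1%g.
Proof. by case: Hab => bT _ Ss; apply: bT. Qed.

Lemma ell_b s p : S s -> p \in b s -> ell p.2 = 0%N.
Proof. by move=> Ss bp; rewrite (pi_b Ss bp) (len1 HW). Qed.

Lemma pi_ninv_mul s w : S s -> pi ((n s)^-1 * w)%g = (s * pi w)%g.
Proof. by move=> Ss; rewrite piM piV (pc_lift HW1 Ss) (gen_inv HW Ss). Qed.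

Lemma ell_n_mul s w : S s ->
  ell (n s * w)%g = (ell w).+1 \/ ell w = (ell ((n s)^-1 * w)%g).+1.
Proof. by move=> Ss; rewrite piM pi_ninv_mul // (pc_lift HW1 Ss); apply: (len_mulS HW). Qed.

Lemma ell_descent w : (0 < ell w)%N ->
  exists2 s, S s & ell w = (ell ((n s)^-1 * w)%g).+1.
Proof.
by case/(left_descent HW)=> s Ss e; exists s; rewrite ?pi_ninv_mul.
Qed.

Lemma ThM w w' : ell (w * w')%g = (ell w + ell w')%N -> Th (w * w')%g = Th w * Th w'.
Proof. by case: HH => _ _ + _; apply. Qed.

Lemma tauM w w' : ell (w * w')%g = (ell w + ell w')%N -> tau (w * w')%g = (tau w * tau w')%g.
Proof. by case: HA => + _ _; apply. Qed.

Lemma ThM0 u w : ell u = 0%N -> Th (u * w)%g = Th u * Th w.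
Proof. by move=> u0; rewrite ThM // ell0_mul // u0. Qed.

Lemma tauM0 u w : ell u = 0%N -> tau (u * w)%g = (tau u * tau w)%g.
Proof. by move=> u0; rewrite tauM // ell0_mul // u0. Qed.

Lemma Th_n_mul s w : S s -> ell (n s * w)%g = (ell w).+1 ->
  Th (n s * w)%g = Th (n s) * Th w.
Proof. by move=> Ss e; rewrite ThM // ell_n. Qed.

Lemma tau_n_mul s w : S s -> ell (n s * w)%g = (ell w).+1 ->
  tau (n s * w)%g = (tau (n s) * tau w)%g.
Proof. by move=> Ss e; rewrite tauM // ell_n. Qed.

Lemma Th_descent s w : S s -> ell w = (ell ((n s)^-1 * w)%g).+1 ->
  Th w = Th (n s) * Th ((n s)^-1 * w)%g.
Proof. by move=> Ss e; rewrite -{1}(mulVKg (n s) w); apply: Th_n_mul; rewrite ?mulVKg. Qed.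

Lemma tau_descent s w : S s -> ell w = (ell ((n s)^-1 * w)%g).+1 ->
  tau w = (tau (n s) * tau ((n s)^-1 * w))%g.
Proof. by move=> Ss e; rewrite -{1}(mulVKg (n s) w); apply: tau_n_mul; rewrite ?mulVKg. Qed.

Lemma Th1 : Th 1%g = 1.
Proof.
case: HH => _ span _ _; have [l [c e]] := span 1.
rewrite -[LHS]mulr1 e mulr_sumr; apply: eq_bigr => w _.
by rewrite -scalerAr -ThM0 ?ell1 // mul1g.
Qed.

Lemma tau1 : tau 1%g = 1%g.
Proof. by apply: (@mulIg _ (tau 1%g)); rewrite -tauM0 ?ell1 // !mul1g. Qed.

Lemma Th_ell0_invertible u : ell u = 0%N -> invertible (Th u).
Proof.
move=> u0; exists (Th u^-1%g); split; first by rewrite -ThM0 // mulgV Th1.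
by rewrite -ThM0 ?mulVg ?Th1 ?ell0_inv.
Qed.

Lemma Th_n_conj s u : S s -> pi u = 1%g ->
  Th (n s) * Th u = Th (n s * u * (n s)^-1)%g * Th (n s).
Proof.
move=> Ss u1.
have ell_c : ell (n s * u * (n s)^-1)%g = 0%N.
  by rewrite !piM piV u1 mulg1 mulgV (len1 HW).
by rewrite -(ThM0 _ ell_c) mulgVK -ThM // piM u1 mulg1 (len1 HW) addn0.
Qed.

(* From [T_{n_s}^2 = a_s T_{n_s^2} + T_{n_s} b_s], with [a_s] a unit and [T_{n_s^2}]
   invertible, [T_{n_s} - b_s] gives a right inverse; conjugating [b_s] past
   [T_{n_s}] gives a left one. *)
Lemma Th_n_invertible s : S s -> (exists u, a s * u = 1) -> invertible (Th (n s)).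
Proof.
move=> Ss [u au]; set N := Th (n s); set M := Th (n s * n s)%g.
set B := \sum_(p <- b s) p.1 *: Th p.2.
set B' := \sum_(p <- b s) p.1 *: Th (n s * p.2 * (n s)^-1)%g.
have quad : N * N = a s *: M + N * B by case: HH => _ _ _; apply.
have NB : N * B = B' * N.
  rewrite mulr_sumr mulr_suml; apply: eq_big_seq => p bp.
  by rewrite -scalerAr -scalerAl Th_n_conj // (pi_b Ss bp).
have [Mi [MMi MiM]] := Th_ell0_invertible (ell_nn Ss).
apply: (@invertible_lr _ _ (u *: ((N - B) * Mi)) (u *: (Mi * (N - B')))).
  by rewrite -scalerAr mulrA mulrBr quad addrK -scalerAl MMi scalerA mulrC au scale1r.
by rewrite -scalerAl -mulrA mulrBl -NB quad addrK -scalerAr MiM scalerA mulrC au scale1r.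
Qed.

Hypothesis Ha : forall s, S s -> exists u, a s * u = 1.

Lemma Th_invertible w : invertible (Th w).
Proof.
have [k] := ubnP (ell w); elim: k w => // k IH w.
have [w0 _|w_gt0 lt_wk] := posnP (ell w); first exact: Th_ell0_invertible.
have [s Ss e] := ell_descent w_gt0.
rewrite (Th_descent Ss e); apply: invertibleM; first exact: Th_n_invertible (Ha Ss).
by apply: IH; rewrite -ltnS -e.
Qed.

Lemma Th_units_hom : exists g : A -> ring_units H,
  ghom g /\ forall w, uval (g (tau w)) = Th w.
Proof.
case: HA => _ _ /(_ _ (fun w => to_unit (Th_invertible w))) univ.
have [w w' e|g [gM gT]] := univ; first by apply: uval_inj; rewrite uvalM !uval_to_unit ThM.
by exists g; split=> // w; rewrite gT.
Qed.

Local Notation ideal := (in_ideal (fun s => S s) (quad_gen n a b tau)).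

Definition lift (g : seq (R * W1)) : seq (R * A) := [seq (p.1, tau p.2) | p <- g].

Lemma lift_opp g : fsopp (lift g) = lift (fsopp g).
Proof. by rewrite /fsopp /lift -!map_comp. Qed.

(* [f ++ fsopp h] represents [f - h]: [f] is congruent modulo the ideal to a
   combination of the [tau w]. *)
Definition reducible (f : seq (R * A)) := exists g, ideal (f ++ fsopp (lift g)).

Lemma reducible_coef f f' : coef f =1 coef f' -> reducible f -> reducible f'.
Proof. by move=> ff' [g fg]; exists g; apply: (in_ideal_coef fg) => x; rewrite !coef_cat ff'. Qed.

Lemma reducible_lift g : reducible (lift g).
Proof. by exists g; apply: in_ideal0 => x; rewrite coef_cat coef_opp subrr. Qed.

Lemma reducible_cat f f' : reducible f -> reducible f' -> reducible (f ++ f').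
Proof.
move=> [g fg] [g' fg']; exists (g ++ g'); apply: (in_ideal_coef (in_ideal_cat fg fg')) => x.
by rewrite !coef_cat !coef_opp /lift map_cat coef_cat; ring.
Qed.

Lemma reducible_congr f h : ideal (f ++ fsopp h) -> reducible h -> reducible f.
Proof.
move=> fh [g hg]; exists g; apply: (in_ideal_coef (in_ideal_cat fh hg)) => x.
by rewrite !coef_cat !coef_opp; ring.
Qed.

Lemma in_ideal_quad_gen s : S s -> ideal (quad_gen n a b tau s).
Proof. exact: (@in_ideal_gen _ _ _ (fun s => S s) (quad_gen n a b tau) s). Qed.

Definition left_stable (y : A) := forall g, reducible (gmul [:: (1, y)] (lift g)).

Lemma reducible_mull y f : left_stable y -> reducible f -> reducible (gmul [:: (1, y)] f).
Proof.
move=> ys [g fg]; apply: (reducible_congr _ (ys g)).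
apply: (in_ideal_coef (in_ideal_mull 1 y fg)) => x.
by rewrite [RHS]coef_cat coef_opp !coef_gmul_monoml coef_cat coef_opp !mul1r.
Qed.

Lemma left_stable_monomials y : (forall c w, reducible [:: (c, y * tau w)%g]) -> left_stable y.
Proof.
move=> yP; elim=> [|[c w] g IH]; first exact: (reducible_lift [::]).
by rewrite gmul_monoml /= mul1r -cat1s; apply: reducible_cat; rewrite // -gmul_monoml.
Qed.

Lemma left_stable1 : left_stable 1%g.
Proof.
move=> g; apply: (reducible_coef _ (reducible_lift g)) => x.
by rewrite coef_gmul_monoml invg1 mul1g mul1r.
Qed.

Lemma left_stableM y z : left_stable y -> left_stable z -> left_stable (y * z)%g.
Proof.
move=> ys zs g; apply: (reducible_coef _ (reducible_mull ys (zs g))) => x.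
by rewrite !coef_gmul_monoml !mul1r invgM mulgA.
Qed.

Lemma left_stable_ell0 u : ell u = 0%N -> left_stable (tau u).
Proof.
move=> u0; apply: left_stable_monomials => c w.
by rewrite -tauM0 //; apply: (reducible_lift [:: (c, u * w)%g]).
Qed.

Lemma left_stable_n s : S s -> left_stable (tau (n s)).
Proof.
move=> Ss; apply: left_stable_monomials => c w.
have [e|e] := ell_n_mul w Ss.
  by rewrite -tau_n_mul //; apply: (reducible_lift [:: (c, n s * w)%g]).
(* Otherwise [w = n_s w'] with [w'] shorter, and the quadratic relation rewrites
   [T_{n_s} T_w = T_{n_s}^2 T_{w'}]. *)
set w' := ((n s)^-1 * w)%g in e *.
pose g := (a s * c, (n s * n s * w')%g) :: [seq (p.1 * c, (n s * p.2 * w')%g) | p <- b s].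
apply: (reducible_congr (h := lift g)); last exact: reducible_lift.
suff -> : [:: (c, (tau (n s) * tau w)%g)] ++ fsopp (lift g) =
          gmul (quad_gen n a b tau s) [:: (c, tau w')].
  exact/in_ideal_mulr/in_ideal_quad_gen.
rewrite gmul_monomr /quad_gen /fsopp /lift /= -!map_comp (tau_descent Ss e) -/w'.
congr [:: (_, _), (_, _) & _].
- by rewrite mul1r.
- by rewrite mulgA.
- by rewrite mulNr.
- by rewrite tauM0 ?ell_nn.
apply/eq_in_map => p bp /=; congr (_, _); first by rewrite mulNr.
have ell_p := ell_b Ss bp.
have e' : ell (n s * (p.2 * w'))%g = (ell (p.2 * w')%g).+1.
  rewrite (ell0_mul w' ell_p) -e piM (piM p.2) (pi_b Ss bp) mul1g -piM.
  by congr (len (pi _)); apply: mulVKg.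
by rewrite -mulgA tau_n_mul // tauM0 // mulgA.
Qed.

Lemma left_stable_ninv s : S s -> left_stable (tau (n s))^-1.
Proof.
move=> Ss; have [u au] := Ha Ss; apply: left_stable_monomials => c w.
set N := tau (n s); set v := ((n s * n s)^-1 * w)%g.
have tv : (tau (n s * n s) * tau v)%g = tau w.
  by rewrite -tauM0 ?ell_nn //; congr tau; apply: mulVKg.
pose g := [seq (p.1 * (c * u), (p.2 * v)%g) | p <- b s].
(* The quadratic relation multiplied by [T_{n_s}^-1] on the left and by
   [- c u T_v] on the right, where [a_s u = 1] and [T_{n_s^2} T_v = T_w]. *)
have E : ideal [:: (- (c * u), (N * tau v)%g), (c, (N^-1 * tau w)%g) & lift g].
  have := in_ideal_mull 1 N^-1 (in_ideal_mulr (- (c * u)) (tau v) (in_ideal_quad_gen Ss)).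
  move/in_ideal_coef; apply=> x; congr (coef _ x).
  rewrite gmul_monomr gmul_monoml /quad_gen /lift /= -!map_comp.
  congr [:: (_, _), (_, _) & _].
  - by rewrite !mul1r.
  - by rewrite mulgA mulKg.
  - by rewrite mul1r mulrNN mulrCA au mulr1.
  - by rewrite tv.
  apply/eq_in_map => p bp /=.
  by rewrite mul1r mulrNN mulrA (tauM0 v (ell_b Ss bp)) -mulgA mulKg.
apply: (reducible_congr (h := (c * u, (N * tau v)%g) :: fsopp (lift g))).
  apply: (in_ideal_coef E) => x.
  by rewrite [RHS]coef_cat [in RHS]coef_opp !coef_cons coef_opp coef_nil; ring.
rewrite -cat1s lift_opp; apply: reducible_cat; last exact: reducible_lift.
by have := left_stable_n Ss [:: (c * u, v)]; rewrite gmul_monoml /= mul1r.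
Qed.

Definition bistable (y : A) := left_stable y /\ left_stable y^-1.

Lemma bistableM y z : bistable y -> bistable z -> bistable (y * z)%g.
Proof. by move=> [y1 y2] [z1 z2]; split; rewrite ?invgM; apply: left_stableM. Qed.

Lemma bistableV y : bistable y -> bistable y^-1.
Proof. by move=> [y1 y2]; split; rewrite ?invgK. Qed.

Lemma bistable1 : bistable 1%g.
Proof. by split; rewrite ?invg1; apply: left_stable1. Qed.

Lemma bistable_tau w : bistable (tau w).
Proof.
have [k] := ubnP (ell w); elim: k w => // k IH w.
have [w0 _|w_gt0 lt_wk] := posnP (ell w).
  split; first exact: left_stable_ell0.
  have -> : (tau w)^-1%g = tau w^-1 by apply: mulg1_eq; rewrite -tauM0 // mulgV tau1.
  exact/left_stable_ell0/ell0_inv.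
have [s Ss e] := ell_descent w_gt0.
rewrite (tau_descent Ss e); apply: bistableM.
  by split; [apply: left_stable_n | apply: left_stable_ninv].
by apply: IH; rewrite -ltnS -e.
Qed.

Lemma bistable_all y : bistable y.
Proof.
case: HA => _ gen _; have [l ->] := gen y; elim: l => [|[[] w] l IH] /=.
- by rewrite wprod_nil; apply: bistable1.
- by rewrite wprod_cons; apply: bistableM => //; apply/bistableV/bistable_tau.
- by rewrite wprod_cons; apply: bistableM => //; apply: bistable_tau.
Qed.

Lemma reducible_all f : reducible f.
Proof.
elim: f => [|[c y] f IH]; first exact: (reducible_lift [::]).
rewrite -cat1s; apply: reducible_cat => //.
have [ys _] := bistable_all y.
by have := ys [:: (c, 1%g)]; rewrite gmul_monoml /= mul1r tau1 mulg1.
Qed.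

Section Realisation.
Variable iota : A -> H.
Hypotheses (iotaM : forall x y, iota (x * y)%g = iota x * iota y)
           (iota_tau : forall w, iota (tau w) = Th w).

Lemma lin_ext_quad_gen s : S s -> lin_ext iota (quad_gen n a b tau s) = 0.
Proof.
move=> Ss; have quad : Th (n s) * Th (n s) =
    a s *: Th (n s * n s)%g + Th (n s) * \sum_(p <- b s) p.1 *: Th p.2.
  by case: HH => _ _ _; apply.
rewrite /quad_gen /lin_ext big_cat big_map !big_cons big_nil /= !iotaM !iota_tau.
under eq_bigr => p _ do rewrite iotaM !iota_tau scaleNr scalerAr.
by rewrite sumrN -mulr_sumr scale1r quad scaleNr addr0 addrAC addrK subrr.
Qed.

Lemma lin_ext_lift g : lin_ext iota (lift g) = lin_ext Th g.
Proof. by rewrite /lin_ext big_map; apply: eq_bigr => p _; rewrite iota_tau. Qed.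

Lemma lin_ext_surjective h : exists f, lin_ext iota f = h.
Proof.
case: HH => _ span _ _; have [l [c ->]] := span h.
by exists (lift [seq (c w, w) | w <- l]); rewrite lin_ext_lift /lin_ext big_map.
Qed.

Lemma coef_lift_eq0 g : lin_ext Th g = 0 -> coef (lift g) =1 (fun=> 0).
Proof.
case: HH => indep _ _ _; rewrite (lin_ext_keys _ (keys_uniq g)) //.
move=> /(indep _ _ (keys_uniq g)) g0 x.
by rewrite coef_map_keys big1_seq // => w /andP[_ /g0 ->]; rewrite mul0r.
Qed.

Lemma lin_ext_eq0 f : lin_ext iota f = 0 <-> ideal f.
Proof.
have ideal0 := lin_ext_in_ideal iotaM lin_ext_quad_gen.
split=> [f0|/ideal0 //]; have [g fg] := reducible_all f.
have /coef_lift_eq0 g0 : lin_ext Th g = 0.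
  move/ideal0: fg; rewrite lin_ext_cat lin_ext_opp f0 add0r lin_ext_lift.
  by move/eqP; rewrite oppr_eq0 => /eqP.
by apply: (in_ideal_coef fg) => x; rewrite coef_cat coef_opp g0 subr0.
Qed.

End Realisation.

End ProPHecke.

Theorem proposition2p4p3
  (R : comPzRingType)
  (* extended Coxeter group W = Waff ⋊ Ω with length len *)
  (W : groupType) (Waff Om S : pred W) (len : W -> nat)
  (HW : extended_coxeter Waff Om S len)
  (* pro-p Coxeter group W1 -> W with lifts n_s *)
  (W1 : groupType) (pi : W1 -> W) (n : W -> W1)
  (HW1 : prop_coxeter S pi n)
  (* parameters and the generic pro-p Hecke algebra H = H^(1)_R(a,b) *)
  (a : W -> R) (b : W -> seq (R * W1))
  (Hab : hecke_params S pi n a b)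
  (H : algType R) (Th : W1 -> H)
  (HH : is_hecke_algebra S len pi n a b Th)
  (* all a_s are units of R *)
  (Ha : forall s, S s -> exists u : R, (a s * u)%R = 1%R)
  (* the group 𝔄(W^(1)) *)
  (A : groupType) (tau : W1 -> A)
  (HA : is_braid_group len pi tau) :
  (* the map T_w |-> T_w induces a well defined R-algebra homomorphism
     phi : R[A]/𝔞 -> H (via a group hom iota : A -> H^×), which is an
     isomorphism: surjective, with kernel of R[A] -> H exactly 𝔞 *)
  exists iota : A -> H,
    [/\ forall x y : A, iota (x * y)%g = (iota x * iota y)%R,
        iota 1%g = 1%R,
        forall w : W1, iota (tau w) = Th w,
        forall h : H, exists f : seq (R * A), lin_ext iota f = h &
        forall f : seq (R * A),
          lin_ext iota f = 0%R <->
          in_ideal (fun s => S s) (quad_gen n a b tau) f].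
Proof.
have [g [gM g_tau]] := Th_units_hom HW HW1 Hab HH HA Ha.
pose iota x := uval (g x).
have iotaM x y : iota (x * y)%g = iota x * iota y by rewrite /iota gM uvalM.
have iota_tau w : iota (tau w) = Th w by apply: g_tau.
exists iota; split=> //.
- by rewrite /iota ghom1 // uval1.
- exact: (lin_ext_surjective HH iota_tau).
- exact: (lin_ext_eq0 HW HW1 Hab HH HA Ha iotaM iota_tau).
Qed.
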